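(* Let $a<b$ be real numbers and let $h,g:[a,b)\to\mathbb{R}$ be continuous functions such that $h$ is increasing and is not constant on any neighborhood of $a$. For $x\in(a,b)$ let $\mu(x)$ be the supremum of the set of numbers $\tau\in(a,x]$ that are points of local extremum of the function $$t\mapsto \bigl(g(x)-g(a)\bigr)h(t)-\bigl(h(x)-h(a)\bigr)g(t),\qquad t\in[a,b).$$ Suppose that the limit $\lim_{x\to a}\frac{g(x)-g(a)}{h(x)-h(a)}$ exists and is finite. Then $$\varlimsup_{x\to a}\frac{h(\mu(x))-h(a)}{h(x)-h(a)}\ \geq\ \frac1e.$$
   Context: Limits at $a$ are right-hand limits. *)

From HB Require Import structures.
From mathcomp Require Import all_boot all_order all_algebra.
From mathcomp Require Import all_classical all_reals all_analysis.
Set Implicit Arguments. Unset Strict Implicit. Unset Printing Implicit Defensive.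
Import Order.TTheory GRing.Theory Num.Theory.
Import numFieldNormedType.Exports.
Local Open Scope classical_set_scope.
Local Open Scope ring_scope.

Definition local_extremum {R : realType} (D : set R) (F : R -> R) (t : R) : Prop :=
  D t /\
  ((exists2 e : R, 0 < e & forall s, D s -> `|s - t| < e -> F s <= F t) \/
   (exists2 e : R, 0 < e & forall s, D s -> `|s - t| < e -> F t <= F s)).

Definition auxF {R : realType} (a : R) (h g : R -> R) (x : R) : R -> R :=
  fun t => (g x - g a) * h t - (h x - h a) * g t.

Definition mu {R : realType} (a b : R) (h g : R -> R) (x : R) : R :=
  sup [set tau | a < tau <= x /\ local_extremum `[a, b[ (auxF a h g x) tau].

(* Suppose the upper limit is below some q < 1/e.  Choose M with
   q <= r^(M+1) for r = M/(M+1), and points P_k near a with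
   h(P_k) - h(a) = r^k (h(P_0) - h(a)).  For i < j <= i + M the value
   h(P_(j+1)) - h(a) is at least q (h(P_i) - h(a)), so the auxiliary function
   for x = P_i has no local extremum in (P_(j+1), P_i); being continuous, it is
   strictly monotone there.  Written with rho_k = (g(P_k) - g(a))/(h(P_k) - h(a)),
   this says that rho_i - rho_j lies strictly between 0 and
   r (rho_i - rho_(j+1)).  Since r (M+1) <= M, this forces consecutive
   differences of rho to keep one sign and stay away from 0, so rho is
   unbounded, contradicting the convergence of (g - g(a))/(h - h(a)). *)

From HB Require Import structures.
From mathcomp Require Import all_boot all_order all_algebra.
From mathcomp Require Import ring lra zify.
From mathcomp Require Import all_classical all_reals all_analysis.

Set Implicit Arguments. Unset Strict Implicit. Unset Printing Implicit Defensive.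
Import Order.TTheory GRing.Theory Num.Theory.
Import numFieldNormedType.Exports.
Local Open Scope classical_set_scope.
Local Open Scope ring_scope.

Section StrictlyBetween.
Variable R : realDomainType.
Implicit Types c x y z : R.

Definition strictly_between x y z := (x < y < z) || (z < y < x).

Lemma strictly_betweenC x y z : strictly_between x y z = strictly_between z y x.
Proof. exact: orbC. Qed.

Lemma strictly_betweenDr c x y z :
  strictly_between (x + c) (y + c) (z + c) = strictly_between x y z.
Proof. by rewrite /strictly_between !ltrD2r. Qed.

Lemma strictly_betweenN x y z :
  strictly_between (- x) (- y) (- z) = strictly_between x y z.
Proof. by rewrite /strictly_between !ltrN2 orbC andbC [(y < x) && _]andbC. Qed.

Lemma strictly_betweenZ c x y z : 0 < c ->
  strictly_between (c * x) (c * y) (c * z) = strictly_between x y z.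
Proof. by move=> c_gt0; rewrite /strictly_between !ltr_pM2l. Qed.

End StrictlyBetween.

Lemma telescope_lb (R : realDomainType) (u : nat -> R) (d : R) i n :
  (forall m, (i <= m < i + n)%N -> d <= u m - u m.+1) ->
  n%:R * d <= u i - u (i + n)%N.
Proof.
elim: n => [|n IH] du; first by rewrite addn0 mul0r subrr.
have le_n : n%:R * d <= u i - u (i + n)%N.
  by apply: IH => m /andP[im mn]; apply: du; rewrite im /=; lia.
have le_step : d <= u (i + n)%N - u (i + n).+1 by apply: du; lia.
rewrite addnS -addn1 natrD; lra.
Qed.

Lemma gt0_of_mulSn_le (R : realDomainType) (r : R) (M : nat) :
  0 < r -> r * M.+1%:R <= M%:R -> (0 < M)%N.
Proof. by move=> r_gt0; rewrite lt0n; apply: contraTneq => ->; rewrite mulr1 -ltNge. Qed.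

Section GapSequence.
Variables (R : realType) (rho : nat -> R) (r : R) (M : nat).
Hypotheses (r_gt0 : 0 < r) (rM : r * M.+1%:R <= M%:R).
Hypothesis gap : forall i j, (i < j <= i + M)%N ->
  strictly_between 0 (rho i - rho j) (r * (rho i - rho j.+1)).

Let r_le : r <= (1 - r) * M%:R.
Proof. by move: rM; rewrite -natr1 mulrDr mulr1; lra. Qed.

Let r_lt1 : r < 1.
Proof. by have : 0 <= M%:R :> R by []; have := r_le; nra. Qed.

Let M_gt0 : (0 < M)%N := gt0_of_mulSn_le r_gt0 rM.

Hypothesis rho10 : rho 1%N < rho 0%N.

Lemma gap_decreasing i : rho i.+1 < rho i.
Proof.
elim: i => [//|i IH].
have /orP[/andP[_ lt_step]|/andP[_ ?]] :=
  gap (i := i) (j := i.+1) (ltac:(have := M_gt0; lia)).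
  have B_gt0 : 0 < rho i - rho i.+2 by rewrite -(pmulr_rgt0 _ r_gt0); lra.
  have : r * (rho i - rho i.+2) < rho i - rho i.+2 by rewrite gtr_pMl.
  lra.
lra.
Qed.

Lemma gap_increments_lb : exists2 d, 0 < d & forall k, d <= rho k - rho k.+1.
Proof.
have [d d_gt0 d_first] : exists2 d, 0 < d & forall k, (k < M)%N -> d <= rho k - rho k.+1.
  elim: (M) => [|n [d d_gt0 d_le]]; first by exists 1.
  exists (Num.min d (rho n - rho n.+1)); first by rewrite lt_min d_gt0 subr_gt0 gap_decreasing.
  move=> k; rewrite ltnS leq_eqVlt => /orP[/eqP->|kn]; first by rewrite ge_min lexx orbT.
  by rewrite ge_min d_le.
exists d => //; elim/ltn_ind => k IH.
have [|Mk] := ltnP k M; first exact: d_first.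
pose i := (k - M)%N; have ki : k = (i + M)%N by rewrite subnK.
have Md_le : M%:R * d <= rho i - rho k.
  by rewrite ki; apply: telescope_lb => m /andP[_]; rewrite -ki; exact: IH.
have Md_gt0 : 0 < M%:R * d by rewrite mulr_gt0 // ltr0n.
have /orP[/andP[_ lt_step]|/andP[_ ?]] := gap (i := i) (j := k) (ltac:(lia)); last by lra.
have rd_le : r * d <= (1 - r) * M%:R * d by rewrite ler_pM2r.
have Md_le' : (1 - r) * (M%:R * d) <= (1 - r) * (rho i - rho k).
  by rewrite ler_wpM2l // subr_ge0 ltW.
have : r * d < r * (rho k - rho k.+1) by lra.
by rewrite ltr_pM2l // => /ltW.
Qed.

Lemma gap_decreasing_unbounded (B : R) : ~ (forall n, `|rho n| <= B).
Proof.
move=> rho_bounded; have [d d_gt0 d_le] := gap_increments_lb.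
pose n := (Num.truncn (2 * B / d)).+1.
have : 2 * B < n%:R * d by rewrite -ltr_pdivrMr // truncnS_gt.
have := telescope_lb (i := 0) (n := n) (fun m _ => d_le m); rewrite add0n.
by move: (rho_bounded 0%N) (rho_bounded n); rewrite !ler_norml; lra.
Qed.

End GapSequence.

Lemma gap_sequence_unbounded (R : realType) (rho : nat -> R) (r : R) (M : nat) (B : R) :
  0 < r -> r * M.+1%:R <= M%:R ->
  (forall i j, (i < j <= i + M)%N ->
     strictly_between 0 (rho i - rho j) (r * (rho i - rho j.+1))) ->
  ~ (forall n, `|rho n| <= B).
Proof.
move=> r_gt0 rM gap.
have [rho10|rho01|rho01] := ltgtP (rho 1%N) (rho 0%N).
- exact: gap_decreasing_unbounded r_gt0 rM gap rho10 B.
- move=> rho_bounded.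
  apply: (@gap_decreasing_unbounded R (fun n => - rho n) r M r_gt0 rM _ _ B).
  + move=> i j ij; have := gap i j ij.
    by rewrite -strictly_betweenN oppr0 -mulrN !opprB !opprK !(addrC (- rho i)).
  + by rewrite ltrN2.
  + by move=> n; rewrite normrN.
- have := gap 0%N 1%N; rewrite rho01 subrr /strictly_between ltxx !andbF.
  by move=> /(_ (gt0_of_mulSn_le r_gt0 rM)).
Qed.

Section LocalExtremum.
Variables (R : realType) (D : set R) (F : R -> R).

Lemma local_extremum_interior u v c : u < c < v -> `]u, v[ `<=` D ->
  {in `[u, v], forall t, F t <= F c} \/ {in `[u, v], forall t, F c <= F t} ->
  local_extremum D F c.
Proof.
move=> /andP[uc cv] uvD Fc; split; first by apply: uvD; rewrite /= in_itv /= uc cv.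
have e_gt0 : 0 < Num.min (c - u) (v - c) by rewrite lt_min !subr_gt0 uc cv.
have near_c s : `|s - c| < Num.min (c - u) (v - c) -> s \in `[u, v].
  rewrite lt_min !ltr_norml => /andP[/andP[? ?] /andP[? ?]].
  by rewrite in_itv /=; apply/andP; split; lra.
by case: Fc => Fc; [left|right]; exists (Num.min (c - u) (v - c)) => // s _ /near_c; exact: Fc.
Qed.

Lemma continuous_noextremum_strictly_between u v w :
  u < w < v -> {within `[u, v], continuous F} -> `]u, v[ `<=` D ->
  (forall c, u < c < v -> ~ local_extremum D F c) ->
  strictly_between (F u) (F w) (F v).
Proof.
move=> uwv cF uvD noext; have /andP[uw wv] := uwv.
have uv : u <= v by rewrite ltW // (lt_trans uw wv).
have endpoint c : c \in `[u, v] -> ~~ (u < c < v) -> (c == u) || (c == v).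
  by rewrite in_itv /= => /andP[uc cv]; rewrite !lt_neqAle uc cv !andbT negb_and !negbK eq_sym.
have Fmax : {in `[u, v], forall t, F t <= Num.max (F u) (F v)}.
  move=> t tuv; have [c cuv Fc] := EVT_max uv cF; apply: le_trans (Fc t tuv) _.
  have [cint|/(endpoint _ cuv)/orP[]/eqP->] := boolP (u < c < v); last 2 first.
  - by rewrite le_max lexx.
  - by rewrite le_max lexx orbT.
  by exfalso; apply: (noext _ cint); apply: local_extremum_interior cint uvD _; left.
have Fmin : {in `[u, v], forall t, Num.min (F u) (F v) <= F t}.
  move=> t tuv; have [c cuv Fc] := EVT_min uv cF; apply: le_trans (Fc t tuv).
  have [cint|/(endpoint _ cuv)/orP[]/eqP->] := boolP (u < c < v); last 2 first.
  - by rewrite ge_min lexx.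
  - by rewrite ge_min lexx orbT.
  by exfalso; apply: (noext _ cint); apply: local_extremum_interior cint uvD _; right.
have Fw_lt : F w < Num.max (F u) (F v).
  rewrite ltNge; apply/negP => Fw_ge; apply: (noext w uwv).
  by apply: local_extremum_interior uwv uvD _; left => t /Fmax/le_trans; apply.
have Fw_gt : Num.min (F u) (F v) < F w.
  rewrite ltNge; apply/negP => Fw_le; apply: (noext w uwv).
  by apply: local_extremum_interior uwv uvD _; right => t /Fmin; apply: le_trans.
rewrite /strictly_between; move: Fw_lt Fw_gt; rewrite lt_max gt_min.
case/orP => ? /orP[] ?; apply/orP.
- by exfalso; lra.
- by right; apply/andP.
- by left; apply/andP.
- by exfalso; lra.
Qed.

End LocalExtremum.

Lemma limf_esup_lt_near (T : choiceType) (X : filteredType T) (R : realType)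
    (F : set_system X) {FF : Filter F} (f : X -> R) (l : R) :
  (limf_esup (fun x => (f x)%:E) F < l%:E)%E ->
  exists2 q, q < l & F [set x | f x < q].
Proof.
move=> /ereal_inf_lt[_ [V FV <-]] supV.
have ub x : V x -> ((f x)%:E <= ereal_sup ((fun x => (f x)%:E) @` V))%E.
  by move=> Vx; apply: ereal_sup_ubound; exists x.
move: supV ub; case: (ereal_sup _) => [s| |] supV ub //.
- rewrite lte_fin in supV; exists ((s + l) / 2); first lra.
  by apply: filterS FV => x /ub; rewrite lee_fin /=; lra.
- exists (l - 1); first lra.
  by apply: filterS FV => x /ub; rewrite leeNy_eq.
Qed.

Lemma near_right_itv (R : realFieldType) (a : R) (P : R -> Prop) :
  (\forall x \near a^'+, P x) -> exists2 d, 0 < d & forall x, a < x < a + d -> P x.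
Proof.
move=> /nbhs_ballP [d d_gt0 dP]; exists d => // x /andP[ax xd].
apply: dP => //; rewrite /ball /= distrC ger0_norm ?subr_ge0 ?ltW //; lra.
Qed.

Lemma auxF_sub (R : realType) (a : R) (h g : R -> R) (x s : R) :
  h x - h a != 0 -> h s - h a != 0 ->
  auxF a h g x s - auxF a h g x x =
  (h x - h a) * (h s - h a) * ((g x - g a) / (h x - h a) - (g s - g a) / (h s - h a)).
Proof. by move=> hx hs; rewrite /auxF; field; rewrite hx hs. Qed.

(* Since (1 + 1/M)^M <= e and (M/(M+1)) (1 + 1/M) = 1, we get
   (M/(M+1))^(M+1) >= 1/(e (1 + 1/M)), which exceeds q for M large. *)
Lemma exists_ratio_pow_ge (R : realType) (q : R) : q < (expR 1)^-1 ->
  exists M, (0 < M)%N /\ q <= (M%:R / M.+1%:R) ^+ M.+1.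
Proof.
move=> q_lt.
have e_gt0 : 0 < expR 1 :> R := expR_gt0 1.
have qe_lt1 : q * expR 1 < 1 by rewrite -ltr_pdivlMr // div1r.
pose M := (Num.truncn ((1 - q * expR 1)^-1)).+1.
have M_gt0 : 0 < M%:R :> R by rewrite ltr0n.
have M_large : 1 < M%:R * (1 - q * expR 1).
  by rewrite -ltr_pdivrMr ?subr_gt0 // div1r truncnS_gt.
exists M; split => //.
pose z := 1 + M%:R^-1 : R; pose y := M%:R / M.+1%:R : R.
have z_gt0 : 0 < z by rewrite /z ltr_wpDr // invr_ge0 ltW.
have yz : y * z = 1.
  by rewrite /y /z -natr1; field; apply/andP; split; apply/eqP; lra.
have zM_le : z ^+ M <= expR 1.
  apply: (@le_trans _ _ (expR (M%:R^-1) ^+ M)).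
    have z_le : z <= expR (M%:R^-1) by exact: expR_ge1Dx.
    by apply: lerXn2r => //; rewrite nnegrE ?ltW ?expR_gt0.
  by rewrite -expRM_natl mulfV // gt_eqF.
have y_ge : q * expR 1 <= y by rewrite /y ler_pdivlMr ?ltr0n // -natr1; nra.
have yzM : (y * z) ^+ M.+1 = 1 by rewrite yz expr1n.
have : 1 <= y ^+ M.+1 * (expR 1 * z).
  rewrite -[leLHS]yzM exprMn ler_wpM2l ?exprn_ge0 ?divr_ge0 //.
  by rewrite exprS mulrC ler_wpM2r // ltW.
have : q * expR 1 * z <= 1 by rewrite -[leRHS]yz ler_wpM2r // ltW.
have : 0 < expR 1 * z by rewrite mulr_gt0.
nra.
Qed.

Section MeanValuePoint.
Variables (R : realType) (a b : R) (h g : R -> R).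
Hypotheses (h_cont : {within `[a, b[, continuous h})
  (g_cont : {within `[a, b[, continuous g}).
Hypothesis h_homo : {in `[a, b[ &, {homo h : x y / x <= y}}.
Hypothesis h_nonconst : forall c, a < c <= b ->
  exists s t : R, [/\ s \in `[a, c[, t \in `[a, c[ & h s != h t].

Local Notation rho x := ((g x - g a) / (h x - h a)).
Local Notation mu := (mu a b h g).

Let h_le x y : a <= x -> x <= y -> y < b -> h x <= h y.
Proof.
move=> ax xy yb; apply: h_homo => //; rewrite in_itv /= ?ax ?yb ?(le_trans ax xy) //.
exact: le_lt_trans xy yb.
Qed.

Lemma h_sub_gt0 x : a < x < b -> 0 < h x - h a.
Proof.
move=> /andP[ax xb].
have [s [t [+ + /eqP hst]]] := h_nonconst (c := x) (ltac:(by rewrite ax (ltW xb))).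
rewrite !in_itv /= => /andP[s_ge s_lt] /andP[t_ge t_lt].
have := h_le s_ge (ltW s_lt) xb; have := h_le (lexx a) s_ge (lt_trans s_lt xb).
have := h_le t_ge (ltW t_lt) xb; have := h_le (lexx a) t_ge (lt_trans t_lt xb).
move=> ? ? ? ?; rewrite subr_gt0 ltNge; apply/negP => ?; apply: hst; lra.
Qed.

Lemma le_mu x c : a < c <= x -> local_extremum `[a, b[ (auxF a h g x) c ->
  c <= mu x <= x.
Proof.
move=> cx ext.
pose S := [set tau | a < tau <= x /\ local_extremum `[a, b[ (auxF a h g x) tau].
have Sc : S c by [].
have x_ub : ubound S x by move=> t [/andP[_ ->]].
by rewrite (sup_upper_bound _ Sc) ?ge_sup //; [exists c | split; [exists c | exists x]].
Qed.

Lemma no_local_extremum_above q x y : a < y < x -> x < b ->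
  (h (mu x) - h a) / (h x - h a) < q -> q * (h x - h a) <= h y - h a ->
  forall c, y < c < x -> ~ local_extremum `[a, b[ (auxF a h g x) c.
Proof.
move=> /andP[ay yx] xb mu_lt hy c /andP[yc cx] ext.
have ac : a < c := lt_trans ay yc.
have /andP[c_le mu_le] := le_mu (x := x) (c := c) (ltac:(by rewrite ac (ltW cx))) ext.
have hyc := h_le (ltW ay) (ltW yc) (lt_trans cx xb).
have hcmu := h_le (ltW ac) c_le (le_lt_trans mu_le xb).
have hx_gt0 : 0 < h x - h a by rewrite h_sub_gt0 // (lt_trans ay yx).
rewrite ltr_pdivrMr // in mu_lt; lra.
Qed.

Lemma ratio_strictly_between u w v : a < u < w -> w < v < b ->
  (forall c, u < c < v -> ~ local_extremum `[a, b[ (auxF a h g v) c) ->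
  strictly_between 0 (rho v - rho w) ((h u - h a) / (h w - h a) * (rho v - rho u)).
Proof.
move=> /andP[au uw] /andP[wv vb] noext.
have hu : 0 < h u - h a by rewrite h_sub_gt0 // au /=; lra.
have hw : 0 < h w - h a by rewrite h_sub_gt0 //; apply/andP; split; lra.
have hv : 0 < h v - h a by rewrite h_sub_gt0 //; apply/andP; split; lra.
have F_cont : {within `[u, v], continuous (auxF a h g v)}.
  apply: (@continuous_subspaceW _ _ _ `[a, b[).
    by move=> t; rewrite /= !in_itv /= => /andP[? ?]; apply/andP; split; lra.
  by move=> t; apply: cvgB; apply: cvgMr; [exact: h_cont | exact: g_cont].
have uvD : `]u, v[ `<=` `[a, b[.
  by move=> t; rewrite /= !in_itv /= => /andP[? ?]; apply/andP; split; lra.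
have := continuous_noextremum_strictly_between (u := u) (v := v) (w := w)
  (ltac:(by rewrite uw wv)) F_cont uvD noext.
rewrite -(strictly_betweenDr (- auxF a h g v v)) subrr strictly_betweenC.
rewrite !auxF_sub ?lt0r_neq0 //.
have -> : (h v - h a) * (h u - h a) * (rho v - rho u) =
    (h v - h a) * (h w - h a) * ((h u - h a) / (h w - h a) * (rho v - rho u)).
  by field; rewrite !lt0r_neq0.
by move=> between_c; rewrite -(strictly_betweenZ _ _ _ (mulr_gt0 hv hw)) mulr0.
Qed.

Lemma geometric_points x r : a < x < b -> 0 < r <= 1 ->
  exists P : nat -> R, forall k, a < P k <= x /\ h (P k) - h a = r ^+ k * (h x - h a).
Proof.
move=> /andP[ax xb] /andP[r_gt0 r_le1].
have hx := h_sub_gt0 (x := x) (ltac:(by rewrite ax xb)).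
have h_cont_ax : {within `[a, x], continuous h}.
  apply: continuous_subspaceW h_cont => t; rewrite /= !in_itv /= => /andP[? ?].
  by apply/andP; split; lra.
suff /choice[P P_spec] : forall k, exists t, a < t <= x /\ h t - h a = r ^+ k * (h x - h a).
  by exists P.
move=> k.
have rk_gt0 : 0 < r ^+ k by rewrite exprn_gt0.
have step_ge : 0 <= r ^+ k * (h x - h a) by rewrite mulr_ge0 // ltW.
have step_le : r ^+ k * (h x - h a) <= h x - h a.
  by rewrite ler_piMl ?exprn_ile1 // ltW.
have hv : Num.min (h a) (h x) <= h a + r ^+ k * (h x - h a) <= Num.max (h a) (h x).
  by rewrite ge_min le_max; apply/andP; split; apply/orP; [left|right]; lra.
have [t] := IVT (ltW ax) h_cont_ax hv; rewrite in_itv /= => /andP[t_ge t_le] ht.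
have ht' : h t - h a = r ^+ k * (h x - h a) by rewrite ht addrAC subrr add0r.
exists t; split => //; rewrite t_le andbT lt_neqAle t_ge andbT.
apply/eqP => ta; have : 0 < r ^+ k * (h x - h a) by rewrite mulr_gt0.
by rewrite -ht' -ta subrr ltxx.
Qed.

Lemma mu_ratio_not_eventually_lt q : a < b -> cvg (rho x @[x --> a^'+]) ->
  q < (expR 1)^-1 -> ~ a^'+ [set x | (h (mu x) - h a) / (h x - h a) < q].
Proof.
move=> ab rho_cvg q_lt near_q.
have [B [_ rho_bounded]] := cvgr_norm_ley _ _ rho_cvg.
have [d d_gt0 near_d] :=
  near_right_itv (filterI near_q (rho_bounded (B + 1) (ltac:(by rewrite ltrDl)))).
pose x0 := a + Num.min d (b - a) / 2.
have m_gt0 : 0 < Num.min d (b - a) by rewrite lt_min d_gt0 subr_gt0.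
have [m_le_d m_le_ba] : Num.min d (b - a) <= d /\ Num.min d (b - a) <= b - a.
  by rewrite !ge_min !lexx ?orbT.
have x0_ab : a < x0 < b by rewrite /x0; apply/andP; split; lra.
have x0_d : x0 < a + d by rewrite /x0; lra.
have [M [M_gt0 qM]] := exists_ratio_pow_ge q_lt.
pose r := M%:R / M.+1%:R : R.
have r_gt0 : 0 < r by rewrite divr_gt0 ?ltr0n.
have r_lt1 : r < 1 by rewrite ltr_pdivrMr ?ltr0n // mul1r ltr_nat.
have rM : r * M.+1%:R <= M%:R by rewrite divfK ?pnatr_eq0.
have [P P_spec] := geometric_points (r := r) x0_ab (ltac:(by rewrite r_gt0 ltW)).
have P_ab k : a < P k < b by case: (P_spec k) => /andP[? ?] _; apply/andP; split; lra.
have P_near k : (h (mu (P k)) - h a) / (h (P k) - h a) < q /\ `|rho (P k)| <= B + 1.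
  by case: (P_spec k) => /andP[? ?] _; apply: near_d; apply/andP; split; lra.
apply: (@gap_sequence_unbounded R (fun k => rho (P k)) r M (B + 1) r_gt0 rM);
  last by move=> k; case: (P_near k).
move=> i j /andP[ij ji_M] /=.
have P_lt k l : (k < l)%N -> P l < P k.
  move=> kl; rewrite ltNge; apply/negP => Pkl.
  have := h_le (ltW (andP (P_ab k)).1) Pkl (andP (P_ab l)).2.
  rewrite -(lerD2r (- h a)) (P_spec k).2 (P_spec l).2 ler_pM2r ?(h_sub_gt0 x0_ab) //.
  by rewrite ler_iXn2l // leqNgt kl.
have r_step : (h (P j.+1) - h a) / (h (P j) - h a) = r.
  by rewrite (P_spec j).2 (P_spec j.+1).2 exprS -mulrA mulfK // -(P_spec j).2 lt0r_neq0
       ?h_sub_gt0.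
rewrite -r_step; apply: ratio_strictly_between.
- by rewrite (andP (P_ab _)).1 P_lt.
- by rewrite (andP (P_ab _)).2 P_lt.
- apply: no_local_extremum_above (P_near i).1 _.
  + by rewrite (andP (P_ab _)).1 P_lt // ltnS ltnW.
  + exact: (andP (P_ab _)).2.
  rewrite (P_spec i).2 (P_spec j.+1).2 mulrA.
  apply: ler_wpM2r; first exact: ltW (h_sub_gt0 x0_ab).
  rewrite -(subnKC (ltnW (leqW ij))) exprD mulrC.
  apply: ler_wpM2l; first by rewrite exprn_ge0 // ltW.
  by apply: le_trans qM (ler_wiXn2l _ _ _); [exact: ltW | exact: ltW | lia].
Qed.

End MeanValuePoint.

Theorem theorem3 (R : realType) (a b : R) (h g : R -> R) :
  a < b ->
  {within `[a, b[, continuous h} ->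
  {within `[a, b[, continuous g} ->
  {in `[a, b[ &, {homo h : x y / x <= y}} ->
  (forall c, a < c <= b ->
     exists s t : R, [/\ s \in `[a, c[, t \in `[a, c[ & h s != h t]) ->
  cvg ((g x - g a) / (h x - h a) @[x --> a^'+]) ->
  (((expR 1)^-1)%:E <=
    limf_esup (fun x => ((h (mu a b h g x) - h a) / (h x - h a))%:E) a^'+)%E.
Proof.
move=> ab h_cont g_cont h_homo h_nonconst rho_cvg.
rewrite leNgt; apply/negP => /limf_esup_lt_near[q q_lt near_q].
exact: (mu_ratio_not_eventually_lt h_cont g_cont h_homo h_nonconst ab rho_cvg q_lt).
Qed.
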